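(* Let $a,b,c\in\mathbb{R}$ and $P_2:\ell_\infty^2(\mathbb{C})\to\mathbb{C}$, $P_2(z_1,z_2)=az_1^2+bz_2^2+cz_1z_2$. Then $$\|P_2\|=\begin{cases}|a+b|+|c| & \text{if } ab\ge0 \text{ or } |c(a+b)|>4|ab|,\\[2pt] (|a|+|b|)\sqrt{1+\dfrac{c^2}{4|ab|}} & \text{otherwise.}\end{cases}$$
   Context: $\ell_\infty^2(\mathbb{C})$ is $\mathbb{C}^2$ with the sup norm, and $\|P_2\|=\sup\{|P_2(z_1,z_2)|:|z_1|\le1,|z_2|\le1\}$. *)

From Stdlib Require Import Reals.
Open Scope R_scope.

(* C = R x R, z = (Re z, Im z) *)
Definition C : Type := (R * R)%type.
Definition Cadd (z w : C) : C := (fst z + fst w, snd z + snd w).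
Definition Cmul (z w : C) : C :=
  (fst z * fst w - snd z * snd w, fst z * snd w + snd z * fst w).
Definition RtoC (r : R) : C := (r, 0).
Definition Cmod (z : C) : R := sqrt (fst z ^ 2 + snd z ^ 2).

Definition P2 (a b c : R) (z1 z2 : C) : C :=
  Cadd (Cadd (Cmul (RtoC a) (Cmul z1 z1)) (Cmul (RtoC b) (Cmul z2 z2)))
       (Cmul (RtoC c) (Cmul z1 z2)).

Definition P2_values (a b c : R) (r : R) : Prop :=
  exists z1 z2 : C, Cmod z1 <= 1 /\ Cmod z2 <= 1 /\ r = Cmod (P2 a b c z1 z2).

Definition P2_norm (a b c N : R) : Prop := is_lub (P2_values a b c) N.

From Pilot Require Import Defs.
From Stdlib Require Import Reals Lra Psatz.
Open Scope R_scope.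

(* Everything is reduced to real algebra: |P2(z1,z2)|^2 is a polynomial
   [modsq a b c s t p] in s = |z1|^2, t = |z2|^2 and p = Re(z1 * conj z2),
   and the bidisk corresponds to  0 <= s, t <= 1,  p^2 <= s t.

   - Maximum principle (algebraic form).  [modsq] is convex in s (and, by
     symmetry, in t) and homogeneous of degree 2 in (s,t,p); hence a bound
     valid on the torus s = t = 1 and on the two real edges (z1 = x, z2 = 1
     and z1 = 1, z2 = x with x real in [-1,1]) holds on the whole bidisk.
   - On the torus, |P2|^2 = ((a+b)x + c)^2 + (a-b)^2 (1-x^2) with x = cos of
     the phase difference: a quadratic in x that is concave when ab < 0.
     If ab >= 0 or |c(a+b)| > 4|ab|, its maximum over [-1,1] is at x = +-1,
     giving (|a+b| + |c|)^2; the edges are controlled directly (ab >= 0) or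
     by the torus itself (ab < 0).
   - Otherwise ab < 0 and completing the square in p bounds |P2|^2 on the
     whole bidisk by the value at the vertex x = c(a+b)/(4|ab|), which lies
     in [-1,1] and is attained on the torus.
   In each case the bound is attained, which gives the least upper bound. *)

(* [modsq a b c s t p] is |P2(z1,z2)|^2 in terms of s = |z1|^2, t = |z2|^2
   and p = Re(z1 * conj z2). *)
Definition modsq (a b c s t p : R) : R :=
  4*a*b*p^2 + 2*c*(a*s+b*t)*p + c^2*s*t + (a*s-b*t)^2.

Lemma P2_modsq (a b c : R) (z1 z2 : Defs.C) :
  fst (P2 a b c z1 z2) ^ 2 + snd (P2 a b c z1 z2) ^ 2 =
  modsq a b c (fst z1 ^ 2 + snd z1 ^ 2) (fst z2 ^ 2 + snd z2 ^ 2)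
    (fst z1 * fst z2 + snd z1 * snd z2).
Proof.
  destruct z1 as [x1 y1], z2 as [x2 y2].
  unfold P2, Cadd, Cmul, RtoC, modsq; simpl; ring.
Qed.

Lemma modsq_swap (a b c s t p : R) : modsq a b c s t p = modsq b a c t s p.
Proof. unfold modsq; ring. Qed.

Lemma modsq_homogeneous (a b c s t p : R) :
  0 < t -> modsq a b c s t p = t ^ 2 * modsq a b c (s / t) 1 (p / t).
Proof. intro ht; unfold modsq; field; lra. Qed.

Lemma convex_quadratic_le (al be ga u v s M : R) :
  0 <= al -> u <= s <= v ->
  al * u ^ 2 + be * u + ga <= M -> al * v ^ 2 + be * v + ga <= M ->
  al * s ^ 2 + be * s + ga <= M.
Proof.
  intros hal hs hu hv.
  assert (E : (v - u) * (al * s ^ 2 + be * s + ga) =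
    (v - s) * (al * u ^ 2 + be * u + ga) + (s - u) * (al * v ^ 2 + be * v + ga)
    - al * (s - u) * (v - s) * (v - u)) by ring.
  destruct (Req_dec u v) as [<-|huv]; [replace s with u by lra; exact hu|].
  apply (Rmult_le_reg_l (v - u)); [lra|].
  assert (0 <= al * (s - u) * (v - s) * (v - u)).
  { repeat apply Rmult_le_pos; lra. }
  nra.
Qed.

Section Reduction.

Variables (a b c M : R).
Hypothesis M_ge0 : 0 <= M.

(* On the face t = 1, [modsq] is convex in s; the admissible range of s is
   [p^2, 1], whose endpoints lie on a real edge and on the torus. *)
Lemma modsq_face_bound (p s : R) :
  p ^ 2 <= s <= 1 ->
  modsq a b c (p ^ 2) 1 p <= M -> modsq a b c 1 1 p <= M ->
  modsq a b c s 1 p <= M.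
Proof.
  intros hs hl hr.
  set (be := 2 * c * a * p - 2 * a * b + c ^ 2).
  set (ga := 4 * a * b * p ^ 2 + 2 * c * b * p + b ^ 2).
  assert (E : forall r, modsq a b c r 1 p = a ^ 2 * r ^ 2 + be * r + ga)
    by (intro r; unfold modsq, be, ga; ring).
  rewrite E in *; apply (convex_quadratic_le _ _ _ (p ^ 2) 1); nra.
Qed.

(* The maximum principle for points with s <= t: rescale to t = 1. *)
Lemma modsq_bound_ordered (s t p : R) :
  (forall x, x ^ 2 <= 1 -> modsq a b c 1 1 x <= M) ->
  (forall x, x ^ 2 <= 1 -> modsq a b c (x ^ 2) 1 x <= M) ->
  0 <= s <= t -> t <= 1 -> p ^ 2 <= s * t -> modsq a b c s t p <= M.
Proof.
  intros torus edge hst ht hp.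
  destruct (Req_dec t 0) as [t0|t0].
  { assert (s = 0) by lra; subst s t; assert (p = 0) by nra; subst p.
    unfold modsq; nra. }
  assert (tpos : 0 < t) by lra.
  rewrite (modsq_homogeneous _ _ _ _ _ _ tpos).
  set (s' := s / t); set (p' := p / t).
  assert (Es : s = t * s') by (unfold s'; field; lra).
  assert (Ep : p = t * p') by (unfold p'; field; lra).
  assert (hp' : p' ^ 2 <= s').
  { apply (Rmult_le_reg_l (t ^ 2)); [nra|].
    rewrite Es, Ep in hp; nra. }
  assert (hs' : s' <= 1).
  { apply (Rmult_le_reg_l t); [lra|]; nra. }
  assert (F : modsq a b c s' 1 p' <= M).
  { apply modsq_face_bound; [nra| apply edge | apply torus]; nra. }
  assert (t2 : 0 <= t ^ 2 <= 1) by (split; nra).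
  destruct (Rle_dec 0 (modsq a b c s' 1 p')); nra.
Qed.

End Reduction.

Lemma modsq_reduction (a b c M : R) :
  0 <= M ->
  (forall x, x ^ 2 <= 1 -> modsq a b c 1 1 x <= M) ->
  (forall x, x ^ 2 <= 1 -> modsq a b c (x ^ 2) 1 x <= M) ->
  (forall x, x ^ 2 <= 1 -> modsq b a c (x ^ 2) 1 x <= M) ->
  forall s t p, 0 <= s <= 1 -> 0 <= t <= 1 -> p ^ 2 <= s * t ->
  modsq a b c s t p <= M.
Proof.
  intros hM torus edge_ab edge_ba s t p hs ht hp.
  destruct (Rle_dec s t).
  - apply modsq_bound_ordered; auto; lra.
  - rewrite modsq_swap; apply modsq_bound_ordered; auto; try lra.
    intros x hx; rewrite <- modsq_swap; auto.
Qed.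

Lemma Cmod_sq_le1 (z : Defs.C) : Cmod z <= 1 -> fst z ^ 2 + snd z ^ 2 <= 1.
Proof.
  unfold Cmod; intro h.
  rewrite <- (pow2_sqrt (fst z ^ 2 + snd z ^ 2)) by nra.
  pose proof (sqrt_pos (fst z ^ 2 + snd z ^ 2)); nra.
Qed.

(* To identify the norm with N it suffices to bound [modsq] by N^2 on the
   bidisk and to attain N^2 on the torus (at z1 = x + i sqrt(1-x^2), z2 = 1). *)
Lemma P2_norm_of_bound (a b c N : R) :
  0 <= N ->
  (forall s t p, 0 <= s <= 1 -> 0 <= t <= 1 -> p ^ 2 <= s * t ->
     modsq a b c s t p <= N ^ 2) ->
  (exists x, x ^ 2 <= 1 /\ modsq a b c 1 1 x = N ^ 2) ->
  P2_norm a b c N.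
Proof.
  intros hN bound [x [hx hxN]]; split.
  - intros r [z1 [z2 [h1 [h2 ->]]]].
    unfold Cmod at 1; rewrite P2_modsq, <- (sqrt_pow2 N hN).
    apply sqrt_le_1_alt, bound.
    + split; [nra | now apply Cmod_sq_le1].
    + split; [nra | now apply Cmod_sq_le1].
    + destruct z1 as [x1 y1], z2 as [x2 y2]; simpl.
      assert (Lagrange : (x1 ^ 2 + y1 ^ 2) * (x2 ^ 2 + y2 ^ 2)
        - (x1 * x2 + y1 * y2) ^ 2 = (x1 * y2 - y1 * x2) ^ 2) by ring.
      pose proof (pow2_ge_0 (x1 * y2 - y1 * x2)); lra.
  - intros u hu; apply hu.
    exists (x, sqrt (1 - x ^ 2)), (1, 0).
    assert (circle : fst (x, sqrt (1 - x ^ 2)) ^ 2 + snd (x, sqrt (1 - x ^ 2)) ^ 2 = 1).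
    { cbn [fst snd]; rewrite pow2_sqrt by lra; ring. }
    unfold Cmod; rewrite P2_modsq, circle; cbn [fst snd].
    replace (1 ^ 2 + 0 ^ 2) with 1 by ring.
    replace (x * 1 + sqrt (1 - x ^ 2) * 0) with x by ring.
    rewrite sqrt_1, hxN, sqrt_pow2 by exact hN; lra.
Qed.

(* The torus bound in the outer case: (|a+b|+|c|)^2 - |P2|^2 equals
   4ab(1-x^2) + 2(|c(a+b)| - c(a+b)x), which is nonnegative when ab >= 0 and,
   using 1 - x^2 <= 2(1-|x|), also when |c(a+b)| >= 4|ab|. *)
Lemma modsq_torus_le (a b c x : R) :
  a * b >= 0 \/ 4 * Rabs (a * b) <= Rabs (c * (a + b)) -> x ^ 2 <= 1 ->
  modsq a b c 1 1 x <= (Rabs (a + b) + Rabs c) ^ 2.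
Proof.
  intros hcase hx.
  set (m := c * (a + b)).
  assert (E : (Rabs (a + b) + Rabs c) ^ 2 - modsq a b c 1 1 x
              = 4 * a * b * (1 - x ^ 2) + 2 * (Rabs m - m * x)).
  { unfold m; rewrite Rabs_mult.
    replace ((Rabs (a + b) + Rabs c) ^ 2)
      with (Rabs (a + b) ^ 2 + Rabs c ^ 2 + 2 * Rabs c * Rabs (a + b)) by ring.
    rewrite !pow2_abs; unfold modsq; ring. }
  assert (hxabs : Rabs x <= 1) by (rewrite <- (pow2_abs x) in hx; pose proof (Rabs_pos x); nra).
  assert (hmx : m * x <= Rabs m * Rabs x)
    by (rewrite <- Rabs_mult; apply Rle_abs).
  assert (hsq : 1 - x ^ 2 <= 2 * (1 - Rabs x))
    by (rewrite <- (pow2_abs x); pose proof (Rabs_pos x); nra).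
  assert (hx0 : 0 <= 1 - x ^ 2) by lra.
  assert (hmx' : Rabs m * (1 - Rabs x) <= Rabs m - m * x) by lra.
  destruct hcase as [hab | hm].
  - pose proof (Rabs_pos m); pose proof (Rabs_pos x); nra.
  - assert (hab : - Rabs (a * b) <= a * b)
      by (pose proof (Rle_abs (- (a * b))); rewrite Rabs_Ropp in *; lra).
    assert (- Rabs (a * b) * (1 - x ^ 2) <= a * b * (1 - x ^ 2)) by nra.
    assert (Rabs (a * b) * (1 - x ^ 2) <= Rabs (a * b) * (2 * (1 - Rabs x)))
      by (pose proof (Rabs_pos (a * b)); nra).
    fold m in hm.
    assert (4 * Rabs (a * b) * (1 - Rabs x) <= Rabs m * (1 - Rabs x))
      by (apply Rmult_le_compat_r; lra).
    nra.
Qed.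

Lemma modsq_edge (a b c x : R) : modsq a b c (x ^ 2) 1 x = (a * x ^ 2 + c * x + b) ^ 2.
Proof. unfold modsq; ring. Qed.

(* If a and b have the same sign, |a x^2 + b| <= |a+b| on [-1,1], and the
   edge bound follows from the triangle inequality. *)
Lemma modsq_edge_same_sign (a b c x : R) :
  a * b >= 0 -> x ^ 2 <= 1 ->
  modsq a b c (x ^ 2) 1 x <= (Rabs (a + b) + Rabs c) ^ 2.
Proof.
  intros hab hx; rewrite modsq_edge.
  assert (hab' : Rabs (a * x ^ 2 + b) <= Rabs (a + b)).
  { destruct (Rle_dec 0 a); [destruct (Rle_dec 0 b)|].
    all: unfold Rabs; repeat destruct Rcase_abs; nra. }
  assert (hc : Rabs (c * x) <= Rabs c).
  { rewrite Rabs_mult; pose proof (Rabs_pos c).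
    rewrite <- (pow2_abs x) in hx; pose proof (Rabs_pos x); nra. }
  assert (Rabs (a * x ^ 2 + c * x + b) <= Rabs (a + b) + Rabs c).
  { replace (a * x ^ 2 + c * x + b) with ((a * x ^ 2 + b) + c * x) by ring.
    pose proof (Rabs_triang (a * x ^ 2 + b) (c * x)); lra. }
  rewrite <- (pow2_abs (a * x ^ 2 + c * x + b)).
  pose proof (Rabs_pos (a * x ^ 2 + c * x + b)); nra.
Qed.

(* If ab <= 0, the real edge is dominated pointwise by the torus:
   the difference is (1-x^2)((ax+c)^2 + a^2 - 2ab). *)
Lemma modsq_edge_le_torus (a b c x : R) :
  a * b <= 0 -> x ^ 2 <= 1 -> modsq a b c (x ^ 2) 1 x <= modsq a b c 1 1 x.
Proof.
  intros hab hx.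
  assert (E : modsq a b c 1 1 x - modsq a b c (x ^ 2) 1 x
              = (1 - x ^ 2) * ((a * x + c) ^ 2 + a ^ 2 - 2 * a * b))
    by (unfold modsq; ring).
  assert (0 <= (1 - x ^ 2) * ((a * x + c) ^ 2 + a ^ 2 - 2 * a * b))
    by (apply Rmult_le_pos; [lra|];
        pose proof (pow2_ge_0 (a * x + c)); pose proof (pow2_ge_0 a); lra).
  lra.
Qed.

Lemma modsq_le_outer (a b c : R) :
  a * b >= 0 \/ Rabs (c * (a + b)) > 4 * Rabs (a * b) ->
  forall s t p, 0 <= s <= 1 -> 0 <= t <= 1 -> p ^ 2 <= s * t ->
  modsq a b c s t p <= (Rabs (a + b) + Rabs c) ^ 2.
Proof.
  intros hcase.
  assert (torus : forall x, x ^ 2 <= 1 ->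
                  modsq a b c 1 1 x <= (Rabs (a + b) + Rabs c) ^ 2)
    by (intros x hx; apply modsq_torus_le; [lra | exact hx]).
  apply modsq_reduction; [apply pow2_ge_0 | exact torus | |];
    intros x hx; destruct (Rge_dec (a * b) 0) as [hab | hab].
  - now apply modsq_edge_same_sign.
  - eapply Rle_trans; [apply modsq_edge_le_torus; lra | auto].
  - rewrite (Rplus_comm a b); apply modsq_edge_same_sign; lra.
  - eapply Rle_trans; [apply modsq_edge_le_torus; lra |].
    rewrite <- modsq_swap; auto.
Qed.

Lemma outer_norm_sq (a b c : R) :
  (Rabs (a + b) + Rabs c) ^ 2 = (a + b) ^ 2 + c ^ 2 + 2 * Rabs (c * (a + b)).
Proof. rewrite Rabs_mult, <- (pow2_abs (a + b)), <- (pow2_abs c); ring. Qed.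

Lemma outer_attained (a b c : R) :
  exists x, x ^ 2 <= 1 /\ modsq a b c 1 1 x = (Rabs (a + b) + Rabs c) ^ 2.
Proof.
  rewrite outer_norm_sq.
  destruct (Rle_dec 0 (c * (a + b))) as [h | h].
  - exists 1; split; [lra|].
    rewrite Rabs_pos_eq by exact h; unfold modsq; ring.
  - exists (-1); split; [lra|].
    rewrite Rabs_left by lra; unfold modsq; ring.
Qed.

(* Completing the square in p: with k = -ab, the quadratic 4k * modsq is
   (as-bt)^2 (c^2+4k) minus a square, vanishing at the vertex
   p = c(as+bt)/(4k). *)
Lemma modsq_vertex_form (a b c s t p : R) :
  4 * (- (a * b)) * modsq a b c s t p
  = (a * s - b * t) ^ 2 * (c ^ 2 + 4 * (- (a * b)))
    - (4 * (- (a * b)) * p - c * (a * s + b * t)) ^ 2.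
Proof. unfold modsq; ring. Qed.

Lemma opposite_signs (a b : R) :
  a * b < 0 -> (0 < a /\ b < 0) \/ (a < 0 /\ 0 < b).
Proof.
  intro hab; destruct (Rtotal_order a 0) as [ha | [ha | ha]].
  - right; split; [exact ha | nra].
  - subst a; lra.
  - left; split; [exact ha | nra].
Qed.

Lemma inner_value (a b c : R) :
  a * b < 0 ->
  4 * (- (a * b)) * ((Rabs a + Rabs b) ^ 2 * (1 + c ^ 2 / (4 * Rabs (a * b))))
  = (a - b) ^ 2 * (c ^ 2 + 4 * (- (a * b))).
Proof.
  intro hab; rewrite (Rabs_left (a * b)) by exact hab.
  assert (E : (Rabs a + Rabs b) ^ 2 = (a - b) ^ 2).
  { destruct (opposite_signs a b hab) as [[ha hb] | [ha hb]].
    - rewrite (Rabs_pos_eq a), (Rabs_left b) by lra; ring.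
    - rewrite (Rabs_left a), (Rabs_pos_eq b) by lra; ring. }
  rewrite E; field; split; intro z; rewrite z in hab; lra.
Qed.

(* Upper bound in the inner case; it holds for all s, t in [0,1] and all p,
   since |as - bt| <= |a| + |b| when a and b have opposite signs. *)
Lemma modsq_le_inner (a b c s t p : R) :
  a * b < 0 -> 0 <= s <= 1 -> 0 <= t <= 1 ->
  modsq a b c s t p <= (Rabs a + Rabs b) ^ 2 * (1 + c ^ 2 / (4 * Rabs (a * b))).
Proof.
  intros hab hs ht.
  apply (Rmult_le_reg_l (4 * (- (a * b)))); [lra|].
  rewrite modsq_vertex_form, inner_value by exact hab.
  assert (hst : (a * s - b * t) ^ 2 <= (a - b) ^ 2).
  { destruct (opposite_signs a b hab) as [[ha hb] | [ha hb]].
    - assert (0 <= a * s - b * t <= a - b) by (split; nra); nra.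
    - assert (a - b <= a * s - b * t <= 0) by (split; nra); nra. }
  pose proof (pow2_ge_0 (4 * (- (a * b)) * p - c * (a * s + b * t))).
  pose proof (pow2_ge_0 c); nra.
Qed.

(* When |c(a+b)| <= 4|ab|, the vertex x = c(a+b)/(4|ab|) lies in [-1,1]
   and the inner value is attained on the torus there. *)
Lemma inner_attained (a b c : R) :
  a * b < 0 -> Rabs (c * (a + b)) <= 4 * Rabs (a * b) ->
  exists x, x ^ 2 <= 1 /\
    modsq a b c 1 1 x = (Rabs a + Rabs b) ^ 2 * (1 + c ^ 2 / (4 * Rabs (a * b))).
Proof.
  intros hab hc; rewrite (Rabs_left (a * b)) in hc by exact hab.
  set (k := - (a * b)); fold k in hc.
  exists (c * (a + b) / (4 * k)); split.
  - unfold Rdiv; rewrite Rpow_mult_distr, pow_inv, <- (pow2_abs (c * (a + b))).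
    apply (Rmult_le_reg_r ((4 * k) ^ 2)); [unfold k; nra|].
    rewrite Rmult_assoc, Rinv_l by (unfold k; nra).
    pose proof (Rabs_pos (c * (a + b))); nra.
  - apply (Rmult_eq_reg_l (4 * k)); [|unfold k; lra].
    unfold k; rewrite modsq_vertex_form, inner_value by exact hab.
    fold k; field_simplify; [ring | unfold k; lra].
Qed.

Theorem mainTheorem11 (a b c : R) :
  ((a * b >= 0 \/ Rabs (c * (a + b)) > 4 * Rabs (a * b)) ->
     P2_norm a b c (Rabs (a + b) + Rabs c)) /\
  (~ (a * b >= 0 \/ Rabs (c * (a + b)) > 4 * Rabs (a * b)) ->
     P2_norm a b c
       ((Rabs a + Rabs b) * sqrt (1 + c ^ 2 / (4 * Rabs (a * b))))).
Proof.
  split; intro hcase.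
  - apply P2_norm_of_bound.
    + pose proof (Rabs_pos (a + b)); pose proof (Rabs_pos c); lra.
    + now apply modsq_le_outer.
    + apply outer_attained.
  - assert (hab : a * b < 0) by (apply Rnot_ge_lt; tauto).
    assert (hc : Rabs (c * (a + b)) <= 4 * Rabs (a * b))
      by (apply Rnot_gt_le; tauto).
    assert (hpos : 0 <= c ^ 2 / (4 * Rabs (a * b))).
    { rewrite Rabs_left by exact hab.
      apply Rmult_le_pos; [apply pow2_ge_0 |].
      apply Rlt_le, Rinv_0_lt_compat; lra. }
    assert (sq : ((Rabs a + Rabs b) * sqrt (1 + c ^ 2 / (4 * Rabs (a * b)))) ^ 2
                 = (Rabs a + Rabs b) ^ 2 * (1 + c ^ 2 / (4 * Rabs (a * b))))
      by (rewrite Rpow_mult_distr, pow2_sqrt by lra; reflexivity).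
    apply P2_norm_of_bound; rewrite ?sq.
    + pose proof (Rabs_pos a); pose proof (Rabs_pos b);
        pose proof (sqrt_pos (1 + c ^ 2 / (4 * Rabs (a * b)))); nra.
    + intros s t p hs ht _; now apply modsq_le_inner.
    + now apply inner_attained.
Qed.
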